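(* In the setting of an iteration $t$ of the NSGA-II optimizing \textsc{OneMinMax}, with crowding distances computed with respect to $R_t$, let $v_1^{\min},v_1^{\max}$, $V$, $V^+_{\mathrm{in}}$, $V^-_{\mathrm{in}}$ be as defined below and assume $v_1^{\max}>v_1^{\min}$. Then for every $(v_1,v_2)\in V^+_{\mathrm{in}}\cap V^-_{\mathrm{in}}$, there are at most two individuals $x\in R_t$ with $f(x)=(v_1,v_2)$ and $\mathrm{cDis}(x)\ge\frac{2}{v_1^{\max}-v_1^{\min}}$ (regardless of how ties are broken in the sorting steps).
   Context: Search space $\{0,1\}^n$; objective $f=(f_1,f_2)$, both maximized. Populations are multisets of bit strings. Crowding distance of the individuals of a set $S$ (computed with respect to $S$): start with $\mathrm{cDis}(x)=0$ for all $x\in S$; for each $i\in\{1,2\}$, sort $S$ in ascending $f_i$-value as $S_{i.1},\dots,S_{i.|S|}$ (ties broken arbitrarily), set $\mathrm{cDis}(S_{i.1})=\mathrm{cDis}(S_{i.|S|})=+\infty$, and for $2\le j\le |S|-1$ add $\frac{f_i(S_{i.j+1})-f_i(S_{i.j-1})}{f_i(S_{i.|S|})-f_i(S_{i.1})}$ to $\mathrm{cDis}(S_{i.j})$. In the NSGA-II, $R_t=P_t\cup Q_t$ is the multiset union of the parent population $P_t$ and offspring population $Q_t$ of iteration $t$, each of size $N$. \textsc{OneMinMax}: $f(x)=(n-\sum_i x_i,\ \sum_i x_i)$. Notation: $v_1^{\min}=\min\{f_1(x):x\in R_t\}$, $v_1^{\max}=\max\{f_1(x):x\in R_t\}$, $V=f(R_t)=\{f(x):x\in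 R_t\}$, $V^+_{\mathrm{in}}=\{(v_1,v_2)\in V:\exists y\in R_t,\ f(y)=(v_1+1,v_2-1)\}$, $V^-_{\mathrm{in}}=\{(v_1,v_2)\in V:\exists y\in R_t,\ f(y)=(v_1-1,v_2+1)\}$. *)

From mathcomp Require Import all_boot all_order all_fingroup all_algebra.
Set Implicit Arguments. Unset Strict Implicit. Unset Printing Implicit Defensive.
Import Order.TTheory GRing.Theory Num.Theory.

Definition bitstr (n : nat) := n.-tuple bool.
Definition bs0 (n : nat) : bitstr n := [tuple of nseq n false].

Definition ones n (x : bitstr n) : nat := count id x.

Definition fobj n (i : 'I_2) (x : bitstr n) : nat :=
  if val i == 0%N then (n - ones x)%N else ones x.
Definition f1 n (x : bitstr n) : nat := fobj ord0 x.
Definition f2 n (x : bitstr n) : nat := fobj ord_max x.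

(* The k-th individual of the multiset R (given as a sequence). *)
Definition ind n (R : seq (bitstr n)) (k : nat) : bitstr n := nth (bs0 n) R k.

(* A tie-breaking choice of sortings: for each objective i, a permutation s i of
   the positions of R such that j |-> f_i(R_(s i j)) is nondecreasing,
   i.e. S_{i.j+1} = R_(s i j). *)
Definition sorting n (R : seq (bitstr n)) (s : 'I_2 -> {perm 'I_(size R)}) : Prop :=
  forall (i : 'I_2) (j1 j2 : 'I_(size R)), (j1 <= j2)%N ->
    (fobj i (ind R (s i j1)) <= fobj i (ind R (s i j2)))%N.

(* f_i-values along the i-th sorted order, indexed from 0 *)
Definition sval n (R : seq (bitstr n)) (s : 'I_2 -> {perm 'I_(size R)})
  (i : 'I_2) (p : nat) : rat :=
  (nth 0%N [seq fobj i (ind R (s i j)) | j <- enum 'I_(size R)] p)%:R%R.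

(* Contribution of objective i to the crowding distance of the individual at
   position k of R; None stands for +infinity. *)
Definition cdis_part n (R : seq (bitstr n)) (s : 'I_2 -> {perm 'I_(size R)})
  (i : 'I_2) (k : 'I_(size R)) : option rat :=
  let p := val ((s i)^-1 k)%g in
  let m := size R in
  if (p == 0%N) || (p == m.-1) then None
  else Some ((sval s i p.+1 - sval s i p.-1) / (sval s i m.-1 - sval s i 0))%R.

Definition cDis n (R : seq (bitstr n)) (s : 'I_2 -> {perm 'I_(size R)})
  (k : 'I_(size R)) : option rat :=
  match cdis_part s ord0 k, cdis_part s ord_max k with
  | Some a, Some b => Some (a + b)%R
  | _, _ => None
  end.

Definition ge_ext (c : option rat) (t : rat) : bool :=
  if c is Some a then (t <= a)%R else true.

(* v_1^min, v_1^max over R (R nonempty in the statement; n is an upper bound of f_1) *)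
Definition v1min n (R : seq (bitstr n)) : nat := \big[minn/n]_(x <- R) f1 x.
Definition v1max n (R : seq (bitstr n)) : nat := \max_(x <- R) f1 x.

Definition inV n (R : seq (bitstr n)) (v1 v2 : nat) : Prop :=
  exists2 x, x \in R & (f1 x = v1 /\ f2 x = v2).
Definition inVplus n (R : seq (bitstr n)) (v1 v2 : nat) : Prop :=
  inV R v1 v2 /\ exists2 y, y \in R & (f1 y = v1.+1 /\ (f2 y).+1 = v2).
Definition inVminus n (R : seq (bitstr n)) (v1 v2 : nat) : Prop :=
  inV R v1 v2 /\ exists2 y, y \in R & ((f1 y).+1 = v1 /\ f2 y = v2.+1).

From mathcomp Require Import all_boot all_order all_fingroup all_algebra.
From mathcomp Require Import zify.
Import Order.TTheory GRing.Theory Num.Theory.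
Set Implicit Arguments. Unset Strict Implicit. Unset Printing Implicit Defensive.

(* Since v1 - 1 and v1 + 1 both occur as f_1-values, an individual x with
   f(x) = (v1, v2) is interior in both sorted orders. If its two f_1-neighbours
   also have f_1-value v1, the f_1-term of cDis(x) vanishes; moreover its right
   f_1-neighbour is a second individual with value (v1, v2), which in the
   f_2-order lies on one side of x and squeezes the f_2-gap around x to at most
   1. Since the f_2-span of R equals v1max - v1min, cDis(x) is then at most
   1 / (v1max - v1min). Hence every individual reaching the threshold is the
   first or the last of the block of value v1 in the f_1-order: at most two. *)

Section NondecreasingSequence.

Variables (h : nat -> nat) (m : nat).
Hypothesis h_mono : forall a b, (a <= b)%N -> (b < m)%N -> (h a <= h b)%N.

Lemma first_of_level_unique v p1 p2 :
  (p1 < m)%N -> (p2 < m)%N -> h p1 = v -> h p2 = v ->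
  (h p1.-1 < v)%N -> (h p2.-1 < v)%N -> p1 = p2.
Proof.
move=> p1m p2m hp1 hp2 hp1' hp2'.
case: (ltngtP p1 p2) => // [lt12|lt21].
- by have := h_mono (_ : p1 <= p2.-1)%N (_ : p2.-1 < m)%N; lia.
- by have := h_mono (_ : p2 <= p1.-1)%N (_ : p1.-1 < m)%N; lia.
Qed.

Lemma last_of_level_unique v p1 p2 :
  (p1 < m)%N -> (p2 < m)%N -> h p1 = v -> h p2 = v ->
  (v < h p1.+1)%N -> (v < h p2.+1)%N -> p1 = p2.
Proof.
move=> p1m p2m hp1 hp2 hp1' hp2'.
case: (ltngtP p1 p2) => // [lt12|lt21].
- by have := h_mono lt12 p2m; lia.
- by have := h_mono lt21 p1m; lia.
Qed.

Lemma level_interior v p :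
  (p < m)%N -> h p = v ->
  (exists2 r, (r < m)%N & (h r).+1 = v) -> (exists2 r, (r < m)%N & h r = v.+1) ->
  [/\ (0 < p < m.-1)%N, (h p.-1 <= v <= (h p.-1).+1)%N
    & (v <= h p.+1 <= v.+1)%N].
Proof.
move=> pm hp [rm rmm hrm] [rp rpm hrp].
have rm_lt_p : (rm < p)%N.
  by rewrite ltnNge; apply/negP => /h_mono /(_ rmm); lia.
have p_lt_rp : (p < rp)%N.
  by rewrite ltnNge; apply/negP => /h_mono /(_ pm); lia.
have := @h_mono rm p.-1; have := @h_mono p.-1 p.
have := @h_mono p p.+1; have := @h_mono p.+1 rp.
by move=> *; split; lia.
Qed.

(* A second position q' of the same level lies on one side of q, so one of the
   two neighbours of q stays at the level of q. *)
Lemma level_gap_le1 q q' :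
  (0 < q < m.-1)%N -> (q' < m)%N -> q' != q -> h q' = h q ->
  (h q <= (h q.-1).+1)%N -> (h q.+1 <= (h q).+1)%N ->
  (h q.+1 <= (h q.-1).+1)%N.
Proof.
move=> q_in q'm q'q hq' below above.
case: (ltngtP q q') q'q => // [lt_qq'|lt_q'q] _.
- by have := h_mono (_ : q.+1 <= q')%N q'm; lia.
- by have := h_mono (_ : q' <= q.-1)%N (_ : q.-1 < m)%N; lia.
Qed.

End NondecreasingSequence.

Lemma inv_span_lt_threshold (F : numFieldType) (d d' : nat) (c : F) :
  (0 < d)%N -> (d <= d')%N -> (c <= d'%:R^-1)%R -> (c < 2 / d%:R)%R.
Proof.
move=> d_gt0 le_dd' c_le; apply: (le_lt_trans c_le).
apply: (@le_lt_trans _ _ (d%:R^-1)%R).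
  by rewrite lef_pV2 ?posrE ?ltr0n ?ler_nat //; lia.
by rewrite ltr_pMl ?invr_gt0 ?ltr0n // ltr1n.
Qed.

Section CrowdingDistance.

Variables (n : nat) (R : seq (bitstr n)) (s : 'I_2 -> {perm 'I_(size R)}).

Definition sorted_obj (i : 'I_2) (p : nat) : nat :=
  nth 0%N [seq fobj i (ind R (s i j)) | j <- enum 'I_(size R)] p.

Definition rank (i : 'I_2) (k : 'I_(size R)) : nat := val ((s i)^-1 k)%g.

Lemma sorted_obj_ord i (j : 'I_(size R)) :
  sorted_obj i j = fobj i (ind R (s i j)).
Proof.
rewrite /sorted_obj (nth_map j) ?size_enum_ord //.
by congr (fobj i (ind R (s i _))); apply: val_inj; rewrite /= nth_enum_ord.
Qed.

Lemma sorted_obj_rank i k : sorted_obj i (rank i k) = fobj i (ind R k).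
Proof. by rewrite sorted_obj_ord permKV. Qed.

Lemma rank_lt i k : (rank i k < size R)%N.
Proof. exact: ltn_ord. Qed.

Lemma rank_perm i j : rank i (s i j) = j.
Proof. by rewrite /rank permK. Qed.

Lemma rank_inj i : injective (rank i).
Proof. by move=> k k' /val_inj /perm_inj. Qed.

Lemma exists_rank i y : y \in R ->
  exists2 r, (r < size R)%N & sorted_obj i r = fobj i y.
Proof.
move=> yR; have yi : (index y R < size R)%N by rewrite index_mem.
by exists (rank i (Ordinal yi)); rewrite ?rank_lt // sorted_obj_rank /ind nth_index.
Qed.

Hypothesis s_sorting : sorting s.

Lemma sorted_obj_mono i a b :
  (a <= b)%N -> (b < size R)%N -> (sorted_obj i a <= sorted_obj i b)%N.
Proof.
move=> ab bR; have aR := leq_ltn_trans ab bR.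
by have := @s_sorting i (Ordinal aR) (Ordinal bR) ab; rewrite -!sorted_obj_ord.
Qed.

Lemma sorted_obj_bounds i x : x \in R ->
  (sorted_obj i 0 <= fobj i x <= sorted_obj i (size R).-1)%N.
Proof.
move=> /(exists_rank i) [r rR <-].
by rewrite !sorted_obj_mono //; lia.
Qed.

Lemma cdis_partE i k : (0 < rank i k < (size R).-1)%N ->
  cdis_part s i k =
    Some (((sorted_obj i (rank i k).+1 - sorted_obj i (rank i k).-1)%:R
           / (sorted_obj i (size R).-1 - sorted_obj i 0)%:R)%R).
Proof.
move=> k_in; rewrite /cdis_part -/(rank i k).
have -> : (rank i k == 0%N) || (rank i k == (size R).-1) = false by lia.
by rewrite !natrB ?sorted_obj_mono //; lia.
Qed.

Lemma cdis_part_flat i k : (0 < rank i k < (size R).-1)%N ->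
  sorted_obj i (rank i k).-1 = sorted_obj i (rank i k).+1 ->
  cdis_part s i k = Some 0%R.
Proof. by move=> k_in flat; rewrite cdis_partE // flat subnn mul0r. Qed.

Lemma rank_interior i (k : 'I_(size R)) :
  (exists2 y, y \in R & (fobj i y).+1 = fobj i (ind R k)) ->
  (exists2 y, y \in R & fobj i y = (fobj i (ind R k)).+1) ->
  [/\ (0 < rank i k < (size R).-1)%N,
       (sorted_obj i (rank i k).-1 <= fobj i (ind R k)
          <= (sorted_obj i (rank i k).-1).+1)%N
     & (fobj i (ind R k) <= sorted_obj i (rank i k).+1
          <= (fobj i (ind R k)).+1)%N].
Proof.
move=> [ym ymR hym] [yp ypR hyp].
have [rm rmR hrm] := exists_rank i ymR; have [rp rpR hrp] := exists_rank i ypR.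
have hrm' : (sorted_obj i rm).+1 = fobj i (ind R k) by rewrite hrm.
have hrp' : sorted_obj i rp = (fobj i (ind R k)).+1 by rewrite hrp.
by have := level_interior (sorted_obj_mono i) (rank_lt i k) (sorted_obj_rank i k)
  (ex_intro2 _ _ rm rmR hrm') (ex_intro2 _ _ rp rpR hrp').
Qed.

Lemma cdis_part_twin i (k k' : 'I_(size R)) : k' != k ->
  fobj i (ind R k') = fobj i (ind R k) ->
  (exists2 y, y \in R & (fobj i y).+1 = fobj i (ind R k)) ->
  (exists2 y, y \in R & fobj i y = (fobj i (ind R k)).+1) ->
  exists2 c, cdis_part s i k = Some c
    & (c <= (sorted_obj i (size R).-1 - sorted_obj i 0)%:R^-1)%R.
Proof.
move=> k'k twin lower upper.
have [k_in /andP[_ below] /andP[_ above]] := rank_interior lower upper.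
have rank_k'k : rank i k' != rank i k by rewrite (inj_eq (@rank_inj i)).
rewrite -(sorted_obj_rank i k) in below above.
have gap := level_gap_le1 (sorted_obj_mono i) k_in (rank_lt i k') rank_k'k
  (etrans (sorted_obj_rank i k') (etrans twin (esym (sorted_obj_rank i k))))
  below above.
eexists; first exact: cdis_partE.
rewrite -[X in (_ <= X)%R]mul1r ler_wpM2r ?invr_ge0 ?ler0n // lern1; lia.
Qed.

Lemma f1_add_f2 (x : bitstr n) : f1 x + f2 x = n.
Proof. by have := count_size id x; rewrite size_tuple /f1 /f2 /fobj /ones /=; lia. Qed.

Lemma v1span_le_f2span :
  (v1max R - v1min R <= sorted_obj ord_max (size R).-1 - sorted_obj ord_max 0)%N.
Proof.
set bot := sorted_obj ord_max 0; set top := sorted_obj ord_max (size R).-1.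
have f1_bounds x : x \in R -> (n - top <= f1 x <= n - bot)%N.
  by move=> /(sorted_obj_bounds ord_max); have := f1_add_f2 x; rewrite /f2; lia.
have max_le : (v1max R <= n - bot)%N.
  rewrite /v1max big_seq; apply: (big_ind (fun y => y <= n - bot)%N) => //.
    by move=> *; lia.
  by move=> x /f1_bounds /andP[].
have min_ge : (n - top <= v1min R)%N.
  rewrite /v1min big_seq; apply: (big_ind (fun y => n - top <= y)%N).
  - lia.
  - by move=> *; lia.
  - by move=> x /f1_bounds /andP[].
lia.
Qed.

Lemma crowded_level_boundary v1 v2 (k : 'I_(size R)) :
  (v1min R < v1max R)%N -> inVplus R v1 v2 -> inVminus R v1 v2 ->
  f1 (ind R k) = v1 -> f2 (ind R k) = v2 ->
  ge_ext (cDis s k) (2 / ((v1max R)%:R - (v1min R)%:R))%R ->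
  (sorted_obj ord0 (rank ord0 k).-1 < v1)%N
  || (v1 < sorted_obj ord0 (rank ord0 k).+1)%N.
Proof.
move=> span_gt0 [_ [yp ypR [yp1 yp2]]] [_ [ym ymR [ym1 ym2]]] k1 k2.
set p := rank ord0 k.
have [p_in /andP[below _] /andP[above _]] :=
  @rank_interior ord0 k (ex_intro2 _ _ ym ymR (etrans ym1 (esym k1)))
    (ex_intro2 _ _ yp ypR (etrans yp1 (congr1 S (esym k1)))).
rewrite -/p -/(f1 _) k1 in p_in below above.
apply: contraTT; rewrite negb_or -!leqNgt => /andP[flat_below flat_above].
have part0 : cdis_part s ord0 k = Some 0%R.
  by apply: cdis_part_flat; rewrite -/p //; lia.
have pR : (p.+1 < size R)%N by lia.
pose k' := s ord0 (Ordinal pR).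
have k'1 : f1 (ind R k') = v1.
  by have := sorted_obj_ord ord0 (Ordinal pR); rewrite /= -/k' -/p /f1; lia.
have k'k : k' != k by rewrite -(inj_eq (@rank_inj ord0)) rank_perm -/p /=; lia.
have k'2 : f2 (ind R k') = v2.
  by have := f1_add_f2 (ind R k'); have := f1_add_f2 (ind R k); lia.
have [c part1 c_le] := @cdis_part_twin ord_max k k' k'k (etrans k'2 (esym k2))
  (ex_intro2 _ _ yp ypR (etrans yp2 (esym k2)))
  (ex_intro2 _ _ ym ymR (etrans ym2 (congr1 S (esym k2)))).
rewrite /cDis part0 part1 /= add0r -natrB 1?ltnW //.
rewrite -ltNge; apply: inv_span_lt_threshold _ v1span_le_f2span c_le; lia.
Qed.

Lemma card_crowded_level_le2 v1 v2 :
  (v1min R < v1max R)%N -> inVplus R v1 v2 -> inVminus R v1 v2 ->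
  (#|[set k : 'I_(size R) |
        ((f1 (ind R k) == v1) && (f2 (ind R k) == v2))
        && ge_ext (cDis s k) (2 / ((v1max R)%:R - (v1min R)%:R) : rat)%R]| <= 2)%N.
Proof.
move=> span_gt0 vplus vminus; set S := [set k | _].
have S_level k : k \in S -> sorted_obj ord0 (rank ord0 k) = v1.
  by rewrite inE sorted_obj_rank => /andP[/andP[/eqP]].
set first := [set k in S | sorted_obj ord0 (rank ord0 k).-1 < v1]%N.
set last := [set k in S | v1 < sorted_obj ord0 (rank ord0 k).+1]%N.
have S_sub : S \subset first :|: last.
  apply/subsetP => k; rewrite !inE => /andP[/andP[/eqP k1 /eqP k2] crowded].
  rewrite k1 k2 !eqxx crowded.
  exact: crowded_level_boundary span_gt0 vplus vminus k1 k2 crowded.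
clearbody S.
have first_le1 : (#|first| <= 1)%N.
  apply/card_le1_eqP => k k'; rewrite !inE => /andP[kS k_first] /andP[k'S k'_first].
  apply: (@rank_inj ord0).
  by have := first_of_level_unique (sorted_obj_mono ord0) (rank_lt ord0 k)
    (rank_lt ord0 k') (S_level k kS) (S_level k' k'S) k_first k'_first.
have last_le1 : (#|last| <= 1)%N.
  apply/card_le1_eqP => k k'; rewrite !inE => /andP[kS k_last] /andP[k'S k'_last].
  apply: (@rank_inj ord0).
  by have := last_of_level_unique (sorted_obj_mono ord0) (rank_lt ord0 k)
    (rank_lt ord0 k') (S_level k kS) (S_level k' k'S) k_last k'_last.
by have := subset_leq_card S_sub; rewrite cardsU; lia.
Qed.

End CrowdingDistance.

Theorem lemma4 (n N : nat) (P Q : seq (bitstr n))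
  (s : 'I_2 -> {perm 'I_(size (P ++ Q))}) (v1 v2 : nat) :
  size P = N -> size Q = N ->
  sorting s ->
  (v1min (P ++ Q) < v1max (P ++ Q))%N ->
  inVplus (P ++ Q) v1 v2 -> inVminus (P ++ Q) v1 v2 ->
  (#|[set k : 'I_(size (P ++ Q)) |
        ((f1 (ind (P ++ Q) k) == v1) && (f2 (ind (P ++ Q) k) == v2))
        && ge_ext (cDis s k)
             (2 / ((v1max (P ++ Q))%:R - (v1min (P ++ Q))%:R) : rat)%R]| <= 2)%N.
Proof.
by move=> _ _ s_sorting; exact: card_crowded_level_le2.
Qed.
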